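(* Let $G$ be a finite simple graph with at least two vertices and maximum degree $k$, regarded as a slim Hoffman graph. Then $G$ is $(-k)$-reducible.
   Context: A Hoffman graph $\mathfrak{H}$ is a finite simple graph $H$ together with a labeling of each vertex as slim or fat, such that every fat vertex is adjacent to at least one slim vertex and the fat vertices are pairwise non-adjacent. $V^s(\mathfrak{H})$, $V^f(\mathfrak{H})$ denote the sets of slim and fat vertices; for a vertex $x$, $N^f_{\mathfrak{H}}(x)$ denotes the set of fat neighbours of $x$. $\mathfrak{H}$ is slim if it has no fat vertices; an ordinary graph is identified with a slim Hoffman graph. An induced Hoffman subgraph of $\mathfrak{H}$ is a Hoffman graph whose underlying graph is an induced subgraph of $H$, with the inherited labels. Writing the adjacency matrix of $H$ with fat vertices last as $\begin{pmatrix}A_s & C\\ C^T & O\end{pmatrix}$, set $B(\mathfrak{H})=A_s-CC^T$ (rows/columns indexed by slim vertices); $\lambda_{\min}(\mathfrak{H})$ is the smallest eigenvalue of $B(\mathfrak{H})$. A decomposition of $\mathfrak{H}$ is a family $\{\mathfrak{H}^i\}_{i=1}^n$ of induced Hoffman subgraphs such that: (i) $V(\mathfrak{H})=\bigcup_i V(\mathfrak{H}^i)$; (ii) $V^s(\mathfrak{H}^i)\cap V^s(\mathfrak{H}^j)=\emptyset$ for $i\ne j$; (iii) if $x\in V^s(\mathfrak{H}^i)$ and $y$ is a fat neighbour of $x$ in $\mathfrak{H}$, then $y\in V(\mathfrak{H}^i)$; (iv) if $x\in V^s(\mathfrak{H}^i)$, $y\in V^s(\mathfrak{H}^j)$, $i\neq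 j$, then $|N^f_{\mathfrak{H}}(x)\cap N^f_{\mathfrak{H}}(y)|\le 1$, with equality if and only if $x,y$ are adjacent. For a real $\alpha<0$, a Hoffman graph $\mathfrak{H}$ with $\lambda_{\min}(\mathfrak{H})\ge\alpha$ is $\alpha$-reducible if there exist a Hoffman graph $\mathfrak{H}'$ containing $\mathfrak{H}$ as an induced Hoffman subgraph and a decomposition $\{\mathfrak{H}^1,\mathfrak{H}^2\}$ of $\mathfrak{H}'$ with $\lambda_{\min}(\mathfrak{H}^i)\ge\alpha$ and $V^s(\mathfrak{H}^i)\cap V^s(\mathfrak{H})\ne\emptyset$ for $i=1,2$. *)

From HB Require Import structures.
From mathcomp Require Import all_boot all_order all_algebra.
Set Implicit Arguments. Unset Strict Implicit. Unset Printing Implicit Defensive.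
Import Order.TTheory GRing.Theory Num.Theory.

Definition is_hoffman (V : finType) (adj : rel V) (fat : pred V) : Prop :=
  [/\ symmetric adj, irreflexive adj,
      (forall x y, fat x -> fat y -> ~~ adj x y)
    & (forall y, fat y -> exists x, ~~ fat x && adj x y)].

Definition induced_is_hoffman (V : finType) (adj : rel V) (fat : pred V)
    (W : {set V}) : Prop :=
  forall y, y \in W -> fat y -> exists2 x, x \in W & ~~ fat x && adj x y.

Definition slimset (V : finType) (fat : pred V) (W : {set V}) : {set V} :=
  [set x in W | ~~ fat x].

(* B = A_s - C C^T of the induced Hoffman subgraph on W, rows/columns indexed
   by the slim vertices of W (enumerated via enum_val). *)
Definition Bmat (R : nzRingType) (V : finType) (adj : rel V) (fat : pred V)
    (W : {set V}) : 'M[R]_#|slimset fat W| :=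
  \matrix_(i, j)
    let x := enum_val i in let y := enum_val j in
    ((adj x y)%:R - #|[set z in W | fat z && adj x z && adj y z]|%:R)%R.

(* lambda_min(induced subgraph on W) >= alpha : every eigenvalue of B is >= alpha
   (over a real closed field all eigenvalues of the symmetric matrix B lie in R). *)
Definition lambda_min_ge (R : rcfType) (V : finType) (adj : rel V) (fat : pred V)
    (W : {set V}) (alpha : R) : Prop :=
  forall a : R, eigenvalue (Bmat R adj fat W) a -> (alpha <= a)%R.

Definition fatnbr (V : finType) (adj : rel V) (fat : pred V) (x : V) : {set V} :=
  [set y | fat y && adj x y].

Definition decomposition (V : finType) (adj : rel V) (fat : pred V)
    (I : finType) (W : I -> {set V}) : Prop :=
  [/\ (forall i, induced_is_hoffman adj fat (W i)),
      (forall v : V, exists i, v \in W i),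
      (forall i j, i != j -> [disjoint slimset fat (W i) & slimset fat (W j)]),
      (forall i x y, x \in slimset fat (W i) -> fat y -> adj x y -> y \in W i)
    & (forall i j x y, i != j -> x \in slimset fat (W i) -> y \in slimset fat (W j) ->
         (#|fatnbr adj fat x :&: fatnbr adj fat y| <= 1)%N /\
         ((#|fatnbr adj fat x :&: fatnbr adj fat y| == 1%N) = adj x y))].

(* alpha-reducibility of the Hoffman graph (V, adj, fat); it includes the
   standing requirement lambda_min >= alpha. H' contains H as induced Hoffman
   subgraph via an injective map f preserving adjacency and labels. *)
Definition alpha_reducible (R : rcfType) (V : finType) (adj : rel V) (fat : pred V)
    (alpha : R) : Prop :=
  lambda_min_ge adj fat [set: V] alpha /\
  exists (V' : finType) (adj' : rel V') (fat' : pred V') (f : V -> V')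
         (W : bool -> {set V'}),
    [/\ is_hoffman adj' fat', injective f,
        (forall x y, adj' (f x) (f y) = adj x y)
      & (forall x, fat' (f x) = fat x)] /\
    [/\ decomposition adj' fat' W,
        (forall i, lambda_min_ge adj' fat' (W i) alpha)
      & (forall i, exists x, ~~ fat x /\ f x \in slimset fat' (W i))].

Definition maxdeg (V : finType) (adj : rel V) : nat :=
  \max_(x : V) #|[set y | adj x y]|.

(* Fix a vertex v0 of G.  The witness H' is G extended by one fat vertex f_w
   for every neighbour w of v0, with f_w adjacent exactly to v0 and w.  The
   decomposition of H' has the two parts
     W true  = {v0} together with all fat vertices,
     W false = V \ {v0} together with all fat vertices;
   two slim vertices v0, u of different parts share exactly the fat vertex f_u
   when they are adjacent and none otherwise, as a decomposition requires.

   All eigenvalue bounds come from one fact: an eigenvalue of a real matrix is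
   at least minus its largest absolute column sum.  For B(G) = A(G) the column
   sums are degrees; for W true, B is the 1x1 matrix (-deg v0); for W false,
   the column of u carries the off-diagonal entries adj x u (x <> v0) and the
   diagonal entry -adj v0 u, whose absolute values add up to deg u.
   Since G has two vertices, both parts contain a slim vertex of G. *)

From HB Require Import structures.
From mathcomp Require Import all_boot all_order all_algebra.
Import Order.TTheory GRing.Theory Num.Theory.
Set Implicit Arguments. Unset Strict Implicit.
Open Scope ring_scope.

(* Every eigenvalue of M is at least minus any bound k on the absolute column
   sums of M: evaluate v *m M = a *: v at a coordinate where |v| is maximal. *)
Lemma eigenvalue_ge_neg_colsum (R : realFieldType) (n : nat) (M : 'M[R]_n) (k : R) :
  (forall j, \sum_i `|M i j| <= k) -> forall a, eigenvalue M a -> - k <= a.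
Proof.
move=> colsum_le a /eigenvalueP [v eig_v v_neq0].
case: n M v colsum_le eig_v v_neq0 => [|n] M v colsum_le eig_v v_neq0.
  by rewrite thinmx0 eqxx in v_neq0.
pose j := [arg max_(j > ord0) `|v 0 j|]%O.
have v_max i : `|v 0 i| <= `|v 0 j|.
  by rewrite /j; case: arg_maxP => // j0 _; apply.
have vj_gt0 : 0 < `|v 0 j|.
  rewrite normr_gt0; apply: contraNneq v_neq0 => vj0.
  apply/eqP/rowP => i; rewrite mxE; apply/eqP; rewrite -normr_le0.
  by have := v_max i; rewrite vj0 normr0.
have eig_j : \sum_i v 0 i * M i j = a * v 0 j.
  by have := congr1 (fun w : 'rV_n.+1 => w 0 j) eig_v; rewrite !mxE.
have : `|a| * `|v 0 j| <= k * `|v 0 j|.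
  rewrite -normrM -eig_j; apply: (le_trans (ler_norm_sum _ _ _)).
  apply: (@le_trans _ _ (\sum_i `|v 0 j| * `|M i j|)).
    by apply: ler_sum => i _; rewrite normrM ler_wpM2r.
  by rewrite -mulr_sumr mulrC ler_wpM2r.
by rewrite ler_pM2r // ler_norml => /andP [].
Qed.

(* Column-sum criterion for lambda_min of an induced Hoffman subgraph, in the
   integer data of B: |B x y| <= adj x y + #(common fat neighbours in W). *)
Lemma lambda_min_ge_colsum (R : rcfType) (V : finType) (adj : rel V) (fat : pred V)
    (W : {set V}) (k : nat) :
  (forall y, y \in slimset fat W ->
     (\sum_(x in slimset fat W)
        (adj x y + #|[set z in W | fat z && adj x z && adj y z]|) <= k)%N) ->
  lambda_min_ge adj fat W (- (k%:R : R)).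
Proof.
move=> colsum_le a; apply: eigenvalue_ge_neg_colsum => j.
have := colsum_le _ (enum_valP j); rewrite (big_enum_val (A := mem (slimset fat W))) /=.
rewrite -(ler_nat R) natr_sum; apply: le_trans; apply: ler_sum => i _.
by rewrite mxE natrD (le_trans (ler_normB _ _)) // !ger0_norm.
Qed.

Lemma sum_nat_of_bool (I : finType) (P b : pred I) :
  (\sum_(i | P i) (b i : nat))%N = #|[set i | P i && b i]|.
Proof.
rewrite -sum1_card big_mkcond [RHS]big_mkcond /=; apply: eq_bigr => i _.
by rewrite inE; case: (P i); case: (b i).
Qed.

Lemma card_sum_set (A B : finType) (S : {set A + B}) :
  #|S| = (#|[set x | inl x \in S]| + #|[set w | inr w \in S]|)%N.
Proof.
rewrite -sum1_card (big_sumType _ (fun a => a \in S)) /= -!sum1_card.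
by congr (_ + _)%N; apply: eq_bigl => x; rewrite inE.
Qed.

Lemma deg_le_maxdeg (V : finType) (adj : rel V) (y : V) :
  (#|[set x | adj y x]| <= maxdeg adj)%N.
Proof. exact: (@leq_bigmax V (fun y => #|[set x | adj y x]|) y). Qed.

Lemma slim_lambda_min_ge (R : rcfType) (V : finType) (adj : rel V) :
  symmetric adj -> lambda_min_ge adj pred0 [set: V] (- ((maxdeg adj)%:R : R)).
Proof.
move=> adj_sym; apply: lambda_min_ge_colsum => y _.
rewrite (eq_bigr (fun x => adj x y : nat)) => [|x _]; last first.
  by rewrite (_ : [set z in _ | _] = set0) ?cards0 ?addn0 //; apply/setP => z; rewrite !inE.
rewrite sum_nat_of_bool (leq_trans _ (deg_le_maxdeg adj y)) // subset_leq_card //.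
by apply/subsetP => x; rewrite !inE adj_sym => /andP [].
Qed.

Section FatSplitAtVertex.

Variables (V : finType) (adj : rel V) (v0 : V).
Hypotheses (adj_sym : symmetric adj) (adj_irr : irreflexive adj).

(* The fat vertices of H': one for each neighbour of v0. *)
Definition nbr0 := {w : V | adj v0 w}.

Local Notation vertex := (V + nbr0)%type.

Definition ext_adj : rel vertex := fun a b =>
  match a, b with
  | inl x, inl y => adj x y
  | inl x, inr w | inr w, inl x => (x == v0) || (x == val w)
  | inr _, inr _ => false
  end.

Definition ext_fat : pred vertex := fun a => if a is inr _ then true else false.

Definition part (b : bool) : {set vertex} :=
  [set a | if a is inl x then (x == v0) == b else true].

Local Notation fnbr := (fatnbr ext_adj ext_fat).

(* H' is a Hoffman graph: each fat vertex f_w is adjacent to the slim v0. *)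
Lemma ext_is_hoffman : is_hoffman ext_adj ext_fat.
Proof.
split.
- by move=> [x|w] [y|u] //=; rewrite adj_sym.
- by move=> [x|w] //=; rewrite adj_irr.
- by move=> [x|w] [y|u].
- by move=> [x|w] //= _; exists (inl v0); rewrite /= eqxx.
Qed.

Lemma card_fat_at (u : V) : #|[set w : nbr0 | val w == u]| = adj v0 u.
Proof.
have [v0u|nv0u] := boolP (adj v0 u).
  rewrite (_ : [set w | _] = [set (exist _ u v0u : nbr0)]) ?cards1 //.
  by apply/setP => w; rewrite !inE -val_eqE.
rewrite (_ : [set w | _] = set0) ?cards0 //; apply/setP => w; rewrite !inE.
by apply/negP => /eqP wu; move: (valP w); rewrite /= wu (negbTE nv0u).
Qed.

Lemma card_fnbr (u : V) : u != v0 -> #|fnbr (inl u)| = adj v0 u.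
Proof.
move=> u_neq0; rewrite card_sum_set -(card_fat_at u).
rewrite (_ : [set x | _] = set0); last by apply/setP => x; rewrite !inE.
by rewrite cards0; apply: eq_card => w; rewrite !inE /= (negbTE u_neq0) eq_sym.
Qed.

Lemma fnbr_v0I (u : V) : fnbr (inl v0) :&: fnbr (inl u) = fnbr (inl u).
Proof. by apply/setP => [[x|w]]; rewrite !inE //= eqxx. Qed.

Lemma slim_part (b : bool) (a : vertex) :
  (a \in slimset ext_fat (part b)) = if a is inl x then (x == v0) == b else false.
Proof. by case: a => [x|w]; rewrite !inE /= ?andbT. Qed.

Lemma slim_partP (b : bool) (a : vertex) :
  reflect (exists2 x, a = inl x & (x == v0) = b) (a \in slimset ext_fat (part b)).
Proof.
rewrite slim_part; case: a => [x|w]; last by apply: (iffP idP) => // -[].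
by apply: (iffP eqP) => [xb|[y [->]]]; first exists x.
Qed.

(* Two slim vertices in different parts are v0 and some u <> v0; their common
   fat neighbours are those of u, i.e. f_u if u ~ v0 and nothing otherwise. *)
Lemma cross_common_fat (y : V) : y != v0 ->
  (#|fnbr (inl v0) :&: fnbr (inl y)| <= 1)%N /\
  ((#|fnbr (inl v0) :&: fnbr (inl y)| == 1%N) = adj v0 y).
Proof. by move=> y_neq0; rewrite fnbr_v0I card_fnbr //; case: (adj v0 y). Qed.

(* Fat vertices lie in both parts, so the parts are induced Hoffman subgraphs
   containing all fat neighbours of their slim vertices. *)
Lemma ext_decomposition : decomposition ext_adj ext_fat part.
Proof.
split.
- move=> [] [x|w] //= _ _.
    by exists (inl v0); rewrite ?inE /= ?eqxx.
  exists (inl (val w)); rewrite ?inE /= ?eqxx ?orbT // eqbF_neg.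
  by apply/eqP => w_v0; move: (valP w); rewrite /= w_v0 adj_irr.
- by move=> [x|w]; [exists (x == v0) | exists true]; rewrite inE.
- move=> i j ij; apply/pred0P => a /=; rewrite !slim_part.
  by case: a => // x; case: (x == v0); case: i j ij => [] [].
- by move=> i x [y|w] // _ _ _; rewrite inE.
- move=> i j a c ij /slim_partP [x -> xi] /slim_partP [y -> yj] /=.
  case: i j ij xi yj => [] [] // _.
  + by move=> /eqP -> /negbT y_neq0; apply: cross_common_fat.
  + move=> /negbT x_neq0 /eqP ->.
    by rewrite setIC adj_sym; apply: cross_common_fat.
Qed.

Lemma sum_slim_part (b : bool) (F : vertex -> nat) :
  (\sum_(a in slimset ext_fat (part b)) F a = \sum_(x | (x == v0) == b) F (inl x))%N.
Proof.
rewrite (big_sumType _ (fun a => a \in slimset ext_fat (part b))) /=.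
rewrite [X in (_ + X)%N]big_pred0 => [|w]; last by rewrite slim_part.
by rewrite addn0; apply: eq_bigl => x; rewrite slim_part.
Qed.

(* The part {v0} has B = (-deg v0). *)
Lemma part_true_lambda_min (R : rcfType) :
  lambda_min_ge ext_adj ext_fat (part true) (- ((maxdeg adj)%:R : R)).
Proof.
apply: lambda_min_ge_colsum => _ /slim_partP [u -> /eqP ->].
rewrite sum_slim_part (eq_bigl (pred1 v0)) => [|x]; last by rewrite eqb_id.
rewrite big_pred1_eq /= adj_irr add0n card_sum_set.
rewrite (_ : [set x | _] = set0); last by apply/setP => x; rewrite !inE andbF.
rewrite (_ : [set w | _] = setT); last by apply/setP => w; rewrite !inE /= eqxx.
rewrite cards0 add0n cardsT card_sig (leq_trans _ (deg_le_maxdeg adj v0)) //.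
by apply: subset_leq_card; apply/subsetP => x; rewrite !inE.
Qed.

Lemma card_common_fat_false (x u : V) : x != v0 -> u != v0 ->
  #|[set z in part false | ext_fat z && ext_adj (inl x) z && ext_adj (inl u) z]|
  = ((x == u) && adj v0 u : nat).
Proof.
move=> x_neq0 u_neq0; rewrite card_sum_set.
rewrite (_ : [set y | _] = set0); last by apply/setP => y; rewrite !inE andbF.
rewrite cards0 add0n.
have [<-|xu] := eqVneq x u.
  rewrite -(card_fat_at x); apply: eq_card => w.
  by rewrite !inE /= (negbTE x_neq0) andbb eq_sym.
apply/eqP; rewrite cards_eq0; apply/eqP/setP => w.
rewrite !inE /= (negbTE x_neq0) (negbTE u_neq0) /=.
by apply/andP => -[/eqP <- /eqP ux]; rewrite ux eqxx in xu.
Qed.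

(* The column of u in B(part false) has absolute sum deg u - adj u v0 + adj v0 u. *)
Lemma part_false_lambda_min (R : rcfType) :
  lambda_min_ge ext_adj ext_fat (part false) (- ((maxdeg adj)%:R : R)).
Proof.
apply: lambda_min_ge_colsum => _ /slim_partP [u -> /negbT u_neq0].
rewrite sum_slim_part (eq_bigr (fun x => adj x u + ((x == u) && adj v0 u : nat)))%N;
  last by move=> x; rewrite eqbF_neg => x_neq0; rewrite card_common_fat_false.
rewrite big_split /= sum_nat_of_bool (bigD1 u) /=; last by rewrite eqbF_neg.
rewrite eqxx big1 => [|x /andP [_ /negbTE ->] //]; rewrite addn0.
apply: leq_trans (deg_le_maxdeg adj u).
rewrite [X in (_ <= X)%N](cardsD1 v0) inE adj_sym addnC leq_add2l.
apply: subset_leq_card; apply/subsetP => x.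
by rewrite !inE eqbF_neg adj_sym => /andP [-> ->].
Qed.

End FatSplitAtVertex.

Arguments ext_adj {V} adj v0.
Arguments ext_fat {V} adj v0.
Arguments part {V} adj v0 b.

Theorem mainTheorem1 (R : rcfType) (V : finType) (adj : rel V)
    (adj_sym : symmetric adj) (adj_irr : irreflexive adj)
    (hV : (2 <= #|V|)%N) :
  alpha_reducible adj pred0 (- ((maxdeg adj)%:R : R))%R.
Proof.
split; first exact: slim_lambda_min_ge.
have /card_gt1P [v0 [v1 [_ _ v01]]] := hV.
exists (V + nbr0 adj v0)%type, (ext_adj adj v0), (ext_fat adj v0), inl, (part adj v0).
split; first split.
- exact: ext_is_hoffman.
- by move=> x y [].
- by [].
- by [].
split.
- exact: ext_decomposition.
- by case; [apply: part_true_lambda_min | apply: part_false_lambda_min].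
- case; [exists v0 | exists v1]; rewrite slim_part ?eqxx //.
  by rewrite eqbF_neg eq_sym.
Qed.
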